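(* Let $K$ be a global function field, fix a prime $\infty$ of $K$, let $\mathcal{O}$ be the ring of elements of $K$ regular at every prime other than $\infty$, and let $\mathbb{F}_q$ be the full constant field of $K$ (so $\mathcal{O}^*=\mathbb{F}_q^*$). If $\phi\in\mathcal{O}[X]$ is a polynomial of degree $d\geqslant 2$ with leading coefficient in $\mathcal{O}^*$, then \[\#\mathrm{Per}(\phi,K)\leqslant (q-1)(d-1)+1.\]
   Context: A global function field is a finite extension of $\mathbb{F}_p(t)$; the full constant field is the algebraic closure of $\mathbb{F}_p$ in $K$. $\mathrm{Per}(\phi,K)$ is the set of $x\in K$ with $\phi^n(x)=x$ for some $n\geqslant1$ ($\phi$ viewed as a map $K\to K$). *)

From HB Require Import structures.
From mathcomp Require Import all_boot all_order all_algebra all_field.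
Set Implicit Arguments. Unset Strict Implicit. Unset Printing Implicit Defensive.
Import GRing.Theory.
Local Open Scope ring_scope.

Definition Fpt (p : nat) : fieldType := {fraction {poly 'F_p}}.

(* A global function field is modelled as K : fieldExtType (Fpt p), i.e. a
   finite(-dimensional) field extension of F_p(t). *)

(* A prime (place) of K, given by its valuation ring: a proper subring V of K
   such that for every nonzero x, x \in V or x^-1 \in V. *)
Definition is_prime_of (K : fieldType) (V : K -> Prop) : Prop :=
  [/\ V 1,
      (forall x y, V x -> V y -> V (x - y)),
      (forall x y, V x -> V y -> V (x * y)),
      (exists x, ~ V x) &
      (forall x, x != 0 -> V x \/ V x^-1)].

Definition same_prime (K : fieldType) (V W : K -> Prop) : Prop :=
  forall x, V x <-> W x.

Definition ring_O (K : fieldType) (Vinf : K -> Prop) (x : K) : Prop :=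
  forall V, is_prime_of V -> ~ same_prime V Vinf -> V x.

(* Elements of K algebraic over the prime field F_p = {n%:R}. *)
Definition is_constant (K : fieldType) (x : K) : Prop :=
  exists P : {poly K}, P \is monic /\
    (forall i, exists n : nat, P`_i = n%:R) /\ root P x.

Definition is_periodic (K : nzRingType) (phi : {poly K}) (x : K) : Prop :=
  exists n : nat, (0 < n)%N /\ iter n (fun y => phi.[y]) x = x.

(** Periodic points of [phi] are integral at every finite prime [V]: if [x]
   has a pole at [V], then [v(phi x) = d v(x) < v(x)] because the leading
   coefficient is a unit, so the poles along the orbit of [x] deepen and
   the orbit never returns to [x].  For periodic [a <> b], the slopes
   [(phi b - phi a) / (b - a)] of [phi] along the orbit of the pair lie in
   [O]; around a common period their product telescopes to [1], so every
   such slope is a unit of [O].  A unit [u] of [O] is a constant: otherwise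
   [u] is transcendental over [F_p], and Chevalley's extension theorem
   (via Zorn's lemma) yields primes at which [u], resp. [u^-1], has a pole;
   both must be [Vinf], contradicting that [Vinf] is a valuation ring.
   Finally, fixing a periodic [a], the slope from [a] maps the remaining
   periodic points into [F_q^*], and each fibre consists of roots other
   than [a] of [phi - phi a - c (X - a)], hence has at most [d - 1]
   elements. *)

From mathcomp Require Import all_boot all_order all_algebra all_field.
From mathcomp Require Import ring zify.
From mathcomp Require Import boolp classical_sets.
Set Implicit Arguments. Unset Strict Implicit. Unset Printing Implicit Defensive.
Import GRing.Theory.
Local Open Scope ring_scope.

Record subring (K : fieldType) (A : K -> Prop) : Prop := Subring {
  subring1 : A 1;
  subringB : forall x y, A x -> A y -> A (x - y);
  subringM : forall x y, A x -> A y -> A (x * y) }.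

Lemma exprV_mul_expr (K : fieldType) (w : K) i n : w != 0 -> (i <= n)%N ->
  w^-1 ^+ i * w ^+ n = w ^+ (n - i).
Proof. by move=> w0 le_in; rewrite expfB_cond ?(negPf w0) // exprVn mulrC. Qed.

Section Subring.
Variables (K : fieldType) (A : K -> Prop) (sA : subring A).

Let A1 := subring1 sA.
Let AB := subringB sA.
Let AM := subringM sA.

Lemma subring0 : A 0.
Proof. by rewrite -(subrr 1); apply: AB. Qed.

Lemma subringN x : A x -> A (- x).
Proof. by move=> Ax; rewrite -sub0r; apply: AB => //; apply: subring0. Qed.

Lemma subringD x y : A x -> A y -> A (x + y).
Proof. by move=> Ax Ay; rewrite -[y]opprK; apply: AB => //; apply: subringN. Qed.

Lemma notin_subring_neq0 x : ~ A x -> x != 0.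
Proof. by move=> Nx; apply: contra_not_neq Nx => ->; apply: subring0. Qed.

Lemma subringX x n : A x -> A (x ^+ n).
Proof. by move=> Ax; elim: n => [|n IHn]; rewrite ?expr0 ?exprS //; apply: AM. Qed.

Lemma subring_sum (I : Type) (r : seq I) (P : pred I) (F : I -> K) :
  (forall i, P i -> A (F i)) -> A (\sum_(i <- r | P i) F i).
Proof. exact: (big_ind A subring0 subringD). Qed.

Lemma subring_nat n : A n%:R.
Proof. by elim: n => [|n IHn]; rewrite ?mulr0n ?mulrS; [apply: subring0|apply: subringD]. Qed.

Lemma inv_scaled_sumE (c : nat -> K) w n : w != 0 ->
  (\sum_(i < n.+1) c i * w^-1 ^+ i) * w ^+ n = \sum_(i < n.+1) c i * w ^+ (n - i).
Proof.
move=> w0; rewrite mulr_suml; apply: eq_bigr => i _.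
by rewrite -mulrA exprV_mul_expr // -ltnS.
Qed.

Lemma subring_inv_scaled_sum (c : nat -> K) w n : (forall i, A (c i)) -> A w -> w != 0 ->
  A ((\sum_(i < n.+1) c i * w^-1 ^+ i) * w ^+ n).
Proof.
move=> Ac Aw w0; rewrite inv_scaled_sumE //.
by apply: subring_sum => i _; apply: AM => //; apply: subringX.
Qed.

Lemma subring_horner_inv_scaled (g : {poly K}) w n : (forall i, A g`_i) -> A w -> w != 0 ->
  (size g <= n.+1)%N -> A (g.[w^-1] * w ^+ n).
Proof. by move=> Ag Aw w0 sg; rewrite (horner_coef_wide _ sg); apply: subring_inv_scaled_sum. Qed.

End Subring.

Definition slope (K : fieldType) (f : {poly K}) (a b : K) := (f.[b] - f.[a]) / (b - a).

Lemma slopeE (K : fieldType) (f : {poly K}) a b : a != b ->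
  slope f a b = \sum_(i < size f) f`_i * \sum_(j < i) b ^+ (i.-1 - j) * a ^+ j.
Proof.
move=> ab; rewrite /slope !horner_coef -sumrB mulr_suml; apply: eq_bigr => i _.
by rewrite -mulrBr subrXX mulrCA mulrAC divff ?mul1r // subr_eq0 eq_sym.
Qed.

Lemma subring_slope (K : fieldType) (A : K -> Prop) (f : {poly K}) a b : subring A ->
  (forall i, A f`_i) -> A a -> A b -> a != b -> A (slope f a b).
Proof.
move=> sA Af Aa Ab ab; rewrite slopeE //; apply: subring_sum => // i _.
apply: (subringM sA) => //; apply: subring_sum => // j _.
by apply: (subringM sA); apply: subringX.
Qed.

Lemma subring_ratio_telescope (K : fieldType) (A : K -> Prop) (D : nat -> K) :
  subring A -> (forall k, D k != 0) -> (forall k, A (D k.+1 / D k)) ->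
  forall m k, A (D (m + k)%N / D m).
Proof.
move=> sA D0 AD m; elim=> [|k IHk]; first by rewrite addn0 divff //; apply: subring1.
have -> : D (m + k.+1)%N / D m = D (m + k).+1 / D (m + k)%N * (D (m + k)%N / D m).
  by rewrite addnS mulrA divfK.
exact: subringM.
Qed.

Section Valuation.
Variables (K : fieldType) (V : K -> Prop) (hV : is_prime_of V).

Lemma valuation_subring : subring V.
Proof. by case: hV. Qed.

Let sV := valuation_subring.

Lemma valuation_inv x : ~ V x -> V x^-1.
Proof.
case: hV => _ _ _ _ dichotomy Nx.
by case: (dichotomy x (notin_subring_neq0 sV Nx)).
Qed.

Lemma not_valuation_div_trans a b c : ~ V (a / b) -> ~ V (b / c) -> ~ V (a / c).
Proof.
move=> Nab Nbc Vac; apply: Nab.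
have c0 : c != 0 by apply: contra_not_neq Nbc => ->; rewrite invr0 mulr0; apply: subring0.
have -> : a / b = a / c * (b / c)^-1 by rewrite invf_div mulrA divfK.
by apply: (subringM sV) => //; apply: valuation_inv.
Qed.

Variables (phi : {poly K}) (d : nat).
Hypotheses (d_ge2 : (2 <= d)%N) (size_phi : size phi = d.+1)
  (V_phi : forall i, V phi`_i) (V_lead : V (lead_coef phi)^-1).

Lemma not_valuation_horner_div y : ~ V y -> ~ V (phi.[y] / y).
Proof.
move=> Ny Vr.
have y0 := notin_subring_neq0 sV Ny.
have lc0 : lead_coef phi != 0 by rewrite lead_coef_eq0 -size_poly_eq0 size_phi.
have [e de] : exists e, d = e.+2 by exists d.-2; lia.
have Vy' := valuation_inv Ny.
set S := \sum_(i < e.+2) phi`_i * y ^+ i.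
have phiE : phi.[y] = S + lead_coef phi * y ^+ e.+2.
  by rewrite horner_coef size_phi big_ord_recr lead_coefE size_phi de.
have VS : V (S * y^-1 ^+ e.+1).
  have := subring_inv_scaled_sum sV e.+1 V_phi Vy'.
  by rewrite invrK invr_eq0; apply.
(* [phi y = S + lc y^d] with [S / y^(d-1)] in [V]; solve for [lc y]. *)
have yE : y = (lead_coef phi)^-1 * (phi.[y] / y * y^-1 ^+ e - S * y^-1 ^+ e.+1).
  rewrite phiE !exprVn !exprS; field.
  by rewrite lc0 y0 expf_neq0.
apply: Ny; rewrite yE; apply: (subringM sV) => //; apply: (subringB sV) => //.
by apply: (subringM sV) => //; apply: (subringX sV).
Qed.

Lemma valuation_periodic x : is_periodic phi x -> V x.
Proof.
move=> [n [n_gt0 periodic_x]]; apply: contrapT => Nx.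
pose f y := phi.[y].
have Vx' := valuation_inv Nx.
have escape k : ~ V (iter k.+1 f x / x).
  elim: k => [|k IHk]; first exact: not_valuation_horner_div.
  apply: (not_valuation_div_trans _ IHk); apply: not_valuation_horner_div => Vz.
  by apply: IHk; apply: (subringM sV).
case: n n_gt0 periodic_x => // n _ periodic_x.
apply: (escape n); rewrite periodic_x divff ?(notin_subring_neq0 sV Nx) //.
exact: subring1.
Qed.

End Valuation.

Section PeriodicSlope.
Variables (K : fieldType) (Vinf : K -> Prop) (phi : {poly K}) (d : nat).
Hypotheses (d_ge2 : (2 <= d)%N) (size_phi : size phi = d.+1)
  (O_phi : forall i, ring_O Vinf phi`_i) (O_lead : ring_O Vinf (lead_coef phi)^-1).

Let f y := phi.[y].

Lemma periodic_ring_O x : is_periodic phi x -> ring_O Vinf x.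
Proof.
move=> Px V hV NV.
by apply: (valuation_periodic hV d_ge2 size_phi) => // [i|]; [apply: O_phi|apply: O_lead].
Qed.

Lemma periodic_iter x k : is_periodic phi x -> is_periodic phi (iter k f x).
Proof. by move=> [n [n_gt0 xn]]; exists n; split; rewrite // -iterD addnC iterD xn. Qed.

Lemma periodic_common_period a b : is_periodic phi a -> is_periodic phi b ->
  exists2 N, (0 < N)%N & iter N f a = a /\ iter N f b = b.
Proof.
move=> [m [m_gt0 am]] [n [n_gt0 bn]]; exists (n * m)%N; first by rewrite muln_gt0 n_gt0.
by split; [|rewrite mulnC]; rewrite iterM iter_fix.
Qed.

Lemma periodic_iter_inj a b k : is_periodic phi a -> is_periodic phi b ->
  iter k f a = iter k f b -> a = b.
Proof.
move=> Pa Pb ab_k; have [N N_gt0 [aN bN]] := periodic_common_period Pa Pb.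
have le_k_kN : (k <= k * N)%N by rewrite leq_pmulr.
have period_kN x : iter N f x = x -> iter (k * N) f x = x by move=> xN; rewrite iterM iter_fix.
by rewrite -(period_kN a aN) -(period_kN b bN) -(subnK le_k_kN) !iterD ab_k.
Qed.

Lemma periodic_slope_neq0 a b : is_periodic phi a -> is_periodic phi b -> a != b ->
  slope phi a b != 0.
Proof.
move=> Pa Pb ab; rewrite mulf_neq0 ?invr_eq0 // subr_eq0 1?eq_sym //.
by apply: contra_neq ab => /(@periodic_iter_inj a b 1 Pa Pb).
Qed.

Lemma periodic_slope_unit a b : is_periodic phi a -> is_periodic phi b -> a != b ->
  ring_O Vinf (slope phi a b) /\ ring_O Vinf (slope phi a b)^-1.
Proof.
move=> Pa Pb ab; pose D k := iter k f b - iter k f a.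
have D0 k : D k != 0.
  by rewrite subr_eq0; apply: contra_neq ab => /esym /(periodic_iter_inj Pa Pb).
have slopeD k : slope phi (iter k f a) (iter k f b) = D k.+1 / D k by [].
have VD V : is_prime_of V -> ~ same_prime V Vinf -> forall k, V (D k.+1 / D k).
  move=> hV NV k; rewrite -slopeD; apply: (subring_slope (valuation_subring hV)).
  - by move=> i; apply: O_phi.
  - by apply: periodic_ring_O => //; apply: periodic_iter.
  - by apply: periodic_ring_O => //; apply: periodic_iter.
  - by apply: contra_neq ab => /(periodic_iter_inj Pa Pb).
split=> V hV NV; first exact: (VD V hV NV 0%N).
have [N N_gt0 [aN bN]] := periodic_common_period Pa Pb.
have := subring_ratio_telescope (valuation_subring hV) D0 (VD V hV NV) 1 N.-1.
by rewrite add1n prednK // /D aN bN invf_div.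
Qed.

End PeriodicSlope.

Definition is_int {K : fieldType} (x : K) : Prop := exists k : int, x = k%:~R.

Section Adjoin.
Variable K : fieldType.

Definition adjoin (B : K -> Prop) (z : K) : K -> Prop :=
  fun t => exists2 g : {poly K}, (forall i, B g`_i) & t = g.[z].

Lemma is_int_subring : subring (@is_int K).
Proof.
split; first by exists 1.
  by move=> _ _ [a ->] [b ->]; exists (a - b); rewrite intrB.
by move=> _ _ [a ->] [b ->]; exists (a * b); rewrite intrM.
Qed.

Variables (B : K -> Prop) (sB : subring B).

Lemma adjoin_const z c : B c -> adjoin B z c.
Proof.
move=> Bc; exists c%:P; last by rewrite hornerC.
by move=> i; rewrite coefC; case: (i == 0)%N => //; apply: subring0.
Qed.

Lemma adjoin_gen z : adjoin B z z.
Proof.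
exists 'X; last by rewrite hornerX.
by move=> i; rewrite coefX; apply: subring_nat.
Qed.

Lemma adjoin_subring z : subring (adjoin B z).
Proof.
split; first exact: adjoin_const (subring1 sB).
- move=> _ _ [g Bg ->] [h Bh ->]; exists (g - h); last by rewrite hornerD hornerN.
  by move=> i; rewrite coefB; apply: (subringB sB).
- move=> _ _ [g Bg ->] [h Bh ->]; exists (g * h); last by rewrite hornerM.
  by move=> i; rewrite coefM; apply: subring_sum => // j _; apply: (subringM sB).
Qed.

End Adjoin.

Section MaximalAvoiding.
Variables (K : fieldType) (x : K) (V : K -> Prop).
Hypotheses (sV : subring V) (V_x' : V x^-1) (Nx : ~ V x)
  (V_max : forall z, ~ V z -> adjoin V z x).

Let y := x^-1.

Let x0 : x != 0 := notin_subring_neq0 sV Nx.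

Lemma one_sub_mulV_neq0 b : V b -> 1 - y * b != 0.
Proof.
move=> Vb; apply: contra_not_neq Nx => /eqP; rewrite subr_eq0 => /eqP yb1.
by rewrite -[x]mulr1 yb1 /y mulrA mulfV // mul1r.
Qed.

Lemma one_sub_mulV_expr b n : V b -> exists2 s, V s & (1 - y * b) ^+ n = 1 - y * s.
Proof.
move=> Vb; elim: n => [|n [s Vs sE]].
  by exists 0; rewrite ?expr0 ?mulr0 ?subr0 //; apply: subring0.
exists (s + b - y * s * b); last by rewrite exprS sE; ring.
by apply: (subringB sV); [apply: subringD|apply: (subringM sV) => //; apply: (subringM sV)].
Qed.

(* [y] acts as an element of the maximal ideal of [V]. *)
Lemma one_sub_mulV_inv b : V b -> V (1 - y * b)^-1.
Proof.
move=> Vb; set c := 1 - y * b; apply: contrapT => Nc.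
have [g Vg xE] := V_max Nc.
have Vc : V c by apply: (subringB sV); [apply: (subring1 sV)|apply: (subringM sV)].
have := subring_horner_inv_scaled sV Vg Vc (one_sub_mulV_neq0 Vb) (leqnSn (size g)).
have [s Vs ->] := one_sub_mulV_expr (size g) Vb; rewrite -xE => Vxs.
apply: Nx; have -> : x = x * (1 - y * s) + s by rewrite mulrBr mulr1 mulrA mulfV // mul1r subrK.
exact: subringD.
Qed.

Definition in_yV (c : K) := exists2 v, V v & c = y * v.

Lemma in_yV0 : in_yV 0.
Proof. by exists 0; [apply: subring0|rewrite mulr0]. Qed.

Lemma in_yVD a b : in_yV a -> in_yV b -> in_yV (a + b).
Proof. by move=> [u Vu ->] [v Vv ->]; exists (u + v); [apply: subringD|rewrite mulrDr]. Qed.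

Lemma in_yVMl v a : V v -> in_yV a -> in_yV (v * a).
Proof. by move=> Vv [u Vu ->]; exists (v * u); [apply: (subringM sV)|rewrite mulrCA]. Qed.

Lemma in_yV_sub a : in_yV a -> V a.
Proof. by move=> [u Vu ->]; apply: (subringM sV). Qed.

Definition yV_comb (z : K) (m : nat) (t : K) :=
  exists2 a : nat -> K, (forall i, in_yV (a i)) & t = \sum_(i < m) a i * z ^+ i.

Lemma yV_comb0 z m : yV_comb z m 0.
Proof. by exists (fun=> 0) => [i|]; rewrite ?big1 // => *; rewrite ?mul0r //; apply: in_yV0. Qed.

Lemma yV_combD z m t1 t2 : yV_comb z m t1 -> yV_comb z m t2 -> yV_comb z m (t1 + t2).
Proof.
move=> [a Ia ->] [b Ib ->]; exists (fun i => a i + b i); first by move=> i; apply: in_yVD.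
by rewrite -big_split; apply: eq_bigr => i _; rewrite mulrDl.
Qed.

Lemma yV_combMl z m v t : V v -> yV_comb z m t -> yV_comb z m (v * t).
Proof.
move=> Vv [a Ia ->]; exists (fun i => v * a i); first by move=> i; apply: in_yVMl.
by rewrite mulr_sumr; apply: eq_bigr => i _; rewrite mulrA.
Qed.

Lemma yV_comb_monomial z m c k : in_yV c -> (k < m)%N -> yV_comb z m (c * z ^+ k).
Proof.
move=> Ic lt_km; exists (fun i => if i == k then c else 0).
  by move=> i; case: (i == k) => //; apply: in_yV0.
rewrite (bigD1 (Ordinal lt_km)) //= eqxx big1 ?addr0 // => j /negPf jk.
by rewrite -val_eqE /= in jk; rewrite jk mul0r.
Qed.

Lemma yV_comb_sum z m n (F : 'I_n -> K) :
  (forall j, yV_comb z m (F j)) -> yV_comb z m (\sum_(j < n) F j).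
Proof. by move=> IF; apply: (big_ind (yV_comb z m)) => //; [apply: yV_comb0|apply: yV_combD]. Qed.

(* The relation in [z^-1] expresses [z^m] through lower powers of [z], since
   [1 - b 0] is a unit of [V]; this is the elimination step of Chevalley's
   argument. *)
Lemma yV_comb_reduce z m n : z != 0 -> (n <= m)%N ->
  yV_comb z m.+1 1 -> yV_comb z^-1 n.+1 1 -> yV_comb z m 1.
Proof.
move=> z0 le_nm [a Ia aE] [b Ib bE].
have [v Vv b0E] := Ib 0%N.
set c := 1 - b 0%N.
have c0 : c != 0 by rewrite /c b0E; apply: one_sub_mulV_neq0.
have Vc' : V c^-1 by rewrite /c b0E; apply: one_sub_mulV_inv.
have zmE : z ^+ m = \sum_(j < n) (c^-1 * b j.+1) * z ^+ (m - j.+1).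
  have cE : c = \sum_(j < n) b j.+1 * z^-1 ^+ j.+1.
    rewrite /c bE big_ord_recl expr0 mulr1 addrAC subrr add0r.
    by apply: eq_bigr => j _; rewrite lift0.
  rewrite -[z ^+ m]mul1r -(mulVf c0) {2}cE -mulrA mulr_suml mulr_sumr.
  apply: eq_bigr => j _; rewrite -!mulrA exprV_mul_expr //.
  exact: leq_trans (ltn_ord j) le_nm.
rewrite aE big_ord_recr /=; apply: yV_combD; first by exists a.
apply: yV_combMl; first exact: in_yV_sub.
rewrite zmE; apply: yV_comb_sum => j; apply: yV_comb_monomial; first exact: in_yVMl.
by move: (ltn_ord j) le_nm; lia.
Qed.

Lemma yV_comb_one_absurd z m n : z != 0 -> yV_comb z m 1 -> yV_comb z^-1 n 1 -> False.
Proof.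
have no_empty w : ~ yV_comb w 0 1 by case=> a _; rewrite big_ord0 => /eqP; rewrite oner_eq0.
have [N lt_N] := ubnP (m + n).
elim: N => // N IHN in z m n lt_N *; move=> z0 zm zn.
case: m => [|m] in lt_N zm *; first exact: no_empty zm.
case: n => [|n] in lt_N zn *; first exact: no_empty zn.
have z'0 : z^-1 != 0 by rewrite invr_eq0.
have [le_nm|lt_mn] := leqP n m.
  by apply: (IHN z m n.+1) => //; exact: yV_comb_reduce zm zn.
have lt_N' : (n + m.+1 < N)%N by lia.
have zm' : yV_comb z^-1^-1 m.+1 1 by rewrite invrK.
exact: (IHN z^-1 n m.+1 lt_N' z'0 (yV_comb_reduce z'0 (ltnW lt_mn) zn zm') zm').
Qed.

Lemma yV_comb_of_notin z : ~ V z -> exists m, yV_comb z m 1.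
Proof.
move=> Nz; have [g Vg xE] := V_max Nz.
exists (size g), (fun i => y * g`_i); first by move=> i; exists g`_i.
rewrite -(mulVf x0) -/y xE horner_coef mulr_sumr.
by apply: eq_bigr => i _; rewrite mulrA.
Qed.

Lemma maximal_avoiding_dichotomy z : z != 0 -> V z \/ V z^-1.
Proof.
move=> z0; apply: contrapT => /not_orP [Nz Nz'].
have [m zm] := yV_comb_of_notin Nz; have [n zn] := yV_comb_of_notin Nz'.
exact: yV_comb_one_absurd z0 zm zn.
Qed.

End MaximalAvoiding.

Section Chevalley.
Local Open Scope classical_set_scope.

Lemma bigcup_chain2 (T : Type) (F : set (set T)) a b : total_on F subset ->
  (\bigcup_(X in F) X) a -> (\bigcup_(X in F) X) b -> exists2 X, F X & X a /\ X b.
Proof.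
move=> Ftot [X FX Xa] [Y FY Yb].
case: (Ftot X Y FX FY) => [XY|YX]; first by exists Y => //; split=> //; apply: XY.
by exists X => //; split=> //; apply: YX.
Qed.

Variables (K : fieldType) (x : K).

Definition avoiding (A : set K) := [/\ subring A, A x^-1 & ~ A x].

(* [set0] is admitted so that Zorn's lemma also covers the empty chain. *)
Lemma avoiding_bigcup (F : set (set K)) :
  (forall X, F X -> X = set0 \/ avoiding X) -> total_on F subset ->
  \bigcup_(X in F) X = set0 \/ avoiding (\bigcup_(X in F) X).
Proof.
move=> FP Ftot.
have avoidingF X t : F X -> X t -> avoiding X.
  by move=> FX Xt; case: (FP X FX) => // X0; rewrite X0 in Xt.
have [[t [X0 FX0 X0t]]|empty] := pselect (exists t, (\bigcup_(X in F) X) t); last first.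
  by left; apply/seteqP; split=> [t Ft|//]; apply: empty; exists t.
have [sX0 X0x' _] := avoidingF X0 t FX0 X0t.
right; split; last 2 first.
- by exists X0.
- by move=> [X FX Xx]; have [_ _] := avoidingF X x FX Xx.
split; first by exists X0 => //; apply: (subring1 sX0).
- move=> a b Fa Fb; have [X FX [Xa Xb]] := bigcup_chain2 Ftot Fa Fb.
  have [sX _ _] := avoidingF X a FX Xa; exists X => //; exact: (subringB sX).
- move=> a b Fa Fb; have [X FX [Xa Xb]] := bigcup_chain2 Ftot Fa Fb.
  have [sX _ _] := avoidingF X a FX Xa; exists X => //; exact: (subringM sX).
Qed.

Lemma exists_maximal_avoiding : ~ adjoin is_int x^-1 x ->
  exists2 V, avoiding V & forall z, ~ V z -> adjoin V z x.
Proof.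
move=> Nx.
have sZ := @is_int_subring K.
have Z_avoiding : avoiding (adjoin is_int x^-1).
  by split=> //; [exact: adjoin_subring|exact: adjoin_gen].
have [V [PV V_max]] := Zorn_bigcup avoiding_bigcup.
have {PV} [sV Vx' NVx] : avoiding V.
  case: PV => // V0; exfalso; apply: (V_max _ _ (or_intror Z_avoiding)).
  by rewrite V0; split=> // /(_ 1 (adjoin_const sZ x^-1 (subring1 sZ))).
exists V => // z Nz; apply: contrapT => Nadj.
apply: (V_max (adjoin V z)); last first.
  by right; split=> //; [exact: adjoin_subring|exact: adjoin_const].
split; first by move=> t; apply: adjoin_const.
by move/(_ z (adjoin_gen sV z)).
Qed.

Lemma exists_valuation_notin : x != 0 -> ~ adjoin is_int x^-1 x ->
  exists V, is_prime_of V /\ ~ V x.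
Proof.
move=> x0 /exists_maximal_avoiding [V [sV Vx' Nx] V_max].
exists V; split => //; split; try by case: sV.
- by exists x.
- by move=> z; apply: (maximal_avoiding_dichotomy sV Vx' Nx V_max).
Qed.

End Chevalley.

Lemma Fpt_ext_natr_char (p : nat) (p_prime : prime p) (K : fieldExtType (Fpt p)) :
  (p%:R : K) = 0.
Proof.
have pFp : (p%:R : {poly 'F_p}) = 0 by rewrite -polyC_natr pchar_Fp_0.
have pFpt : (p%:R : Fpt p) = 0 by rewrite /Fpt -(rmorph_nat (@tofrac _)) pFp rmorph0.
by rewrite -scaler_nat pFpt scale0r.
Qed.

Lemma is_constant0 (K : fieldType) : is_constant (0 : K).
Proof.
exists 'X; split; first exact: monicX.
by split; [move=> i; rewrite coefX; exists (i == 1)%N | rewrite /root hornerX].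
Qed.

Section PositiveCharacteristic.
Variables (K : fieldType) (p : nat) (p_prime : prime p) (pK : (p%:R : K) = 0).

Lemma is_int_natr (c : K) : is_int c -> exists n : nat, c = n%:R.
Proof.
case=> [[n|n] ->]; first by exists n.
exists (p.-1 * n.+1)%N.
have p1E : (p.-1)%:R = -1 :> K by rewrite -subn1 natrB ?prime_gt0 // pK sub0r.
by rewrite NegzE intrN natrM p1E mulN1r.
Qed.

Lemma natr_inv_natr n : (n%:R : K) != 0 -> exists k : nat, (n%:R : K)^-1 = k%:R.
Proof.
move=> n0; exists (n ^ (p - 2))%N.
have natr_mod a : (a%:R : K) = (a %% p)%:R.
  by rewrite {1}(divn_eq a p) natrD natrM pK mulr0 add0r.
have fermat : (n ^ p)%:R = (n%:R : K) by rewrite natr_mod fermat_little // -natr_mod.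
have pE : (p - 2).+2 = p by have := prime_gt1 p_prime; lia.
apply: (mulIf n0); rewrite mulVf //; apply: (mulIf n0).
by rewrite mul1r -!natrM -!expnSr pE fermat.
Qed.

Lemma int_root_constant (P : {poly K}) c : P != 0 -> (forall i, is_int P`_i) -> root P c ->
  is_constant c.
Proof.
move=> P0 ZP rootPc; have [n lcE] := is_int_natr (ZP (size P).-1).
have [k kE] : exists k : nat, (lead_coef P)^-1 = k%:R.
  by rewrite lead_coefE lcE; apply: natr_inv_natr; rewrite -lcE -lead_coefE lead_coef_eq0.
exists ((lead_coef P)^-1 *: P); split; [|split].
- by rewrite monicE lead_coefZ mulVf // lead_coef_eq0.
- move=> i; rewrite coefZ kE; have [m ->] := is_int_natr (ZP i).
  by exists (k * m)%N; rewrite natrM.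
- by rewrite /root hornerZ (eqP rootPc) mulr0.
Qed.

Lemma adjoin_int_constant (x : K) : x != 0 -> adjoin is_int x^-1 x -> is_constant x.
Proof.
move=> x0 [g Zg xE]; set n := size g.
(* clearing the denominators of [x = g.[x^-1]] gives [x^(n+1) = Q.[x]] *)
set Q := \sum_(i < n.+1) g`_i *: 'X^(n - i).
have QE j : Q`_j = \sum_(i < n.+1) g`_i * (j == (n - i)%N)%:R.
  by rewrite /Q coef_sum; apply: eq_bigr => i _; rewrite coefZ coefXn.
have sZ := @is_int_subring K.
apply: (@int_root_constant ('X^(n.+1) - Q)).
- apply/eqP => /(congr1 (fun P : {poly K} => P`_n.+1)) /eqP.
  rewrite coefB coefXn eqxx QE big1 ?subr0 ?coef0 ?oner_eq0 // => i _.
  by rewrite gtn_eqF ?mulr0 // ltnS leq_subr.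
- move=> j; rewrite coefB coefXn QE; apply: (subringB sZ); first exact: subring_nat.
  by apply: subring_sum => // i _; apply: (subringM sZ) => //; apply: subring_nat.
- rewrite /root hornerD hornerN hornerXn horner_sum subr_eq0; apply/eqP.
  rewrite exprS {1}xE (horner_coef_wide _ (leqnSn n)) inv_scaled_sumE //.
  by apply: eq_bigr => i _; rewrite hornerZ hornerXn.
Qed.

Lemma adjoin_int_inv_constant (x : K) : x != 0 -> adjoin is_int x x^-1 -> is_constant x.
Proof.
move=> x0 [g Zg x'E]; have sZ := @is_int_subring K.
apply: (@int_root_constant ('X * g - 1)).
- apply/eqP => /(congr1 (fun P : {poly K} => P`_0)) /eqP.
  by rewrite coefB coefXM coefC coef0 /= sub0r oppr_eq0 oner_eq0.
- move=> i; rewrite coefB coefXM coefC; apply: (subringB sZ).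
    by case: (i == 0)%N => //; apply: subring0.
  by case: (i == 0)%N; [apply: (subring1 sZ)|apply: subring0].
- by rewrite /root hornerD hornerN hornerM hornerX hornerC -x'E mulfV // subrr.
Qed.

Lemma ring_O_notin_inf (Vinf : K -> Prop) (z : K) : z != 0 -> ring_O Vinf z ->
  ~ adjoin is_int z^-1 z -> ~ Vinf z.
Proof.
move=> z0 Oz /(exists_valuation_notin z0) [V [hV NVz]] Vinf_z.
have [/(_ z) VE|NV] := pselect (same_prime V Vinf); first by apply/NVz/VE.
exact: NVz (Oz V hV NV).
Qed.

Lemma ring_O_unit_constant (Vinf : K -> Prop) u : is_prime_of Vinf -> u != 0 ->
  ring_O Vinf u -> ring_O Vinf u^-1 -> is_constant u.
Proof.
move=> [_ _ _ _ dichotomy] u0 Ou Ou'; apply: contrapT => Nc.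
have Nu : ~ Vinf u by apply: ring_O_notin_inf => // /(adjoin_int_constant u0).
have Nu' : ~ Vinf u^-1.
  by apply: ring_O_notin_inf; rewrite ?invr_eq0 ?invrK // => /(adjoin_int_inv_constant u0).
by case: (dichotomy u u0).
Qed.

End PositiveCharacteristic.

Lemma size_nonzero_constants (K : fieldType) (consts : seq K) : uniq consts ->
  (forall x, x \in consts <-> is_constant x) ->
  size [seq c <- consts | c != 0] = (size consts).-1.
Proof.
move=> uc Hc; rewrite size_filter -(count_predC (pred1 0)) count_uniq_mem //.
by rewrite (Hc 0).2 ?add1n //; apply: is_constant0.
Qed.

Lemma size_le_mul_fibers (T U : eqType) (g : T -> U) (C : seq U) (t : seq T) k :
  uniq C -> {in t, forall b, g b \in C} -> (forall c, count (fun b => g b == c) t <= k)%N ->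
  (size t <= size C * k)%N.
Proof.
move=> uC tC fibers.
have -> : size t = (\sum_(c <- C) count (fun b => g b == c) t)%N.
  rewrite -sum1_size (eq_big_seq (fun b => \sum_(c <- C) (g b == c))%N) => [|b bt].
    by rewrite exchange_big; apply: eq_bigr => c _; rewrite -sum1_count [RHS]big_mkcond.
  have -> : (\sum_(c <- C) (g b == c))%N = count_mem (g b) C.
    rewrite -sum1_count [RHS]big_mkcond; apply: eq_bigr => c _.
    by rewrite /= eq_sym; case: (_ == _).
  by rewrite count_uniq_mem ?tC.
apply: (@leq_trans (\sum_(c <- C) k)%N); first by apply: leq_sum => c _; apply: fibers.
by rewrite big_const_seq count_predT iter_addn_0 mulnC.
Qed.

Lemma count_slope_eq (K : fieldType) (f : {poly K}) d a c (t : seq K) :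
  (2 <= d)%N -> size f = d.+1 -> uniq t -> a \notin t ->
  (count (fun b => slope f a b == c) t <= d.-1)%N.
Proof.
move=> d_ge2 size_f ut a_t.
set L := f.[a]%:P + c *: ('X - a%:P).
have size_L : (size L <= 2)%N.
  apply: leq_trans (size_polyD _ _) _; rewrite geq_max (leq_trans (size_polyC_leq1 _)) //=.
  by apply: leq_trans (size_scale_leq _ _) _; rewrite size_XsubC.
have size_fL : size (f - L) = d.+1.
  by rewrite size_polyDl ?size_f // size_polyN ltnS (leq_trans size_L).
have fL0 : f - L != 0 by rewrite -size_poly_eq0 size_fL.
set s := [seq b <- t | slope f a b == c].
have roots : all (root (f - L)) (a :: s).
  apply/allP => b; rewrite inE => /predU1P [->|].
    by rewrite /root !hornerE subrr mulr0 addr0 subrr.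
  rewrite /s mem_filter => /andP [/eqP cE bt]; have ab : b - a != 0.
    by rewrite subr_eq0; apply: contraNneq a_t => <-.
  by rewrite /root /L !hornerE -cE /slope divfK //; apply/eqP; ring.
have := max_poly_roots fL0 roots; rewrite /= mem_filter (negPf a_t) andbF filter_uniq //.
by rewrite size_fL size_filter; lia.
Qed.

Unset Implicit Arguments.

Theorem theorem2p5 (p : nat) (p_prime : prime p)
  (K : fieldExtType (Fpt p))
  (Vinf : K -> Prop) (Hinf : is_prime_of Vinf)
  (consts : seq K) (Hcu : uniq consts)
  (Hc : forall x, x \in consts <-> is_constant x)
  (phi : {poly K}) (d : nat) (Hd : (2 <= d)%N) (Hsize : size phi = d.+1)
  (HO : forall i, ring_O Vinf phi`_i)
  (Hlead : ring_O Vinf (lead_coef phi)^-1)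
  (s : seq K) (Hsu : uniq s) (Hper : forall x, x \in s -> is_periodic phi x) :
  (size s <= (size consts).-1 * d.-1 + 1)%N.
Proof.
case: s Hsu Hper => [//|a t] /andP [a_t ut] Hper.
have slopes_const : {in t, forall b, slope phi a b \in [seq c <- consts | c != 0]}.
  move=> b bt; have ab : a != b by apply: contraNneq a_t => ->.
  have Pa := Hper a (mem_head a t).
  have Pb : is_periodic phi b by apply: Hper; rewrite inE bt orbT.
  have slope0 := periodic_slope_neq0 Pa Pb ab.
  have [O_slope O_slope'] := periodic_slope_unit Hd Hsize HO Hlead Pa Pb ab.
  rewrite mem_filter slope0; apply/Hc.
  by apply: (ring_O_unit_constant p_prime (Fpt_ext_natr_char p_prime K) Hinf slope0).
rewrite /= -(@size_nonzero_constants K consts Hcu Hc) addn1 ltnS.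
apply: size_le_mul_fibers (filter_uniq _ Hcu) slopes_const _ => c.
exact: count_slope_eq.
Qed.
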